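(* Let $f:\mathbb{R}^n\to\mathbb{R}$ be continuously differentiable, convex and $L$-smooth with unique minimizer $0$ and $f(0)=0$. Let $g:\mathbb{R}^n\to\mathbb{R}$ be continuously differentiable and strictly convex with Bregman divergence $D_g(y,x)=g(y)-g(x)-\langle\nabla g(x),y-x\rangle$. Let $\alpha,\beta:[0,\infty)\to\mathbb{R}$ satisfy $e^{\alpha(t)}\ge\dot\beta(t)>0$ for all $t$ and $\beta(t)\to\infty$ as $t\to\infty$. (i) (Convex case, $\mu=0$.) Let $Z:[0,\infty)\to\mathbb{R}^n$ solve $\frac{d}{dt}\nabla g(Z)=-e^{\alpha(t)+\beta(t)}\nabla f(Z)$, and set $\tilde{\mathcal{E}}(t)=D_g(0,Z(t))+e^{\beta(t)}f(Z(t))$. (ii) (Uniformly convex case.) Suppose $f$ is $\mu$-uniformly convex with respect to $g$ for some $\mu>0$, i.e. $D_f(x,y)\ge\mu D_g(x,y)$ for all $x,y$. Let $Z:[0,\infty)\to\mathbb{R}^n$ solve $\frac{d}{dt}\nabla g(Z)=-\frac{e^{\alpha(t)}}{\mu}\nabla f(Z)$, and set $\tilde{\mathcal{E}}(t)=e^{\beta(t)}\big(\mu D_g(0,Z(t))+f(Z(t))\big)$. Then in both cases $\tilde{\mathcal{E}}$ is monotonically non-increasing and $f(Z(t))\le e^{-\beta(t)}\tilde{\mathcal{E}}(0)$ for all $t\ge0$.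
   Context: $D_f$ denotes the Bregman divergence of $f$, defined analogously to $D_g$. *)

From HB Require Import structures.
From mathcomp Require Import all_boot all_order all_algebra.
From mathcomp Require Import all_classical all_reals all_analysis.
Set Implicit Arguments. Unset Strict Implicit. Unset Printing Implicit Defensive.
Import Order.TTheory GRing.Theory Num.Theory.
Import numFieldNormedType.Exports.
Local Open Scope classical_set_scope.
Local Open Scope ring_scope.

Section Defs.
Variables (R : realType) (n : nat).
Notation V := 'rV[R]_n.

Definition dotv (u v : V) : R := \sum_(i < n) u 0 i * v 0 i.
Definition enorm (u : V) : R := Num.sqrt (dotv u u).

Definition is_gradient (f : V -> R) (gf : V -> V) : Prop :=
  forall x, differentiable f x /\ forall v : V, 'D_v f x = dotv (gf x) v.

Definition C1_with_gradient (f : V -> R) (gf : V -> V) : Prop :=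
  is_gradient f gf /\ continuous gf.

Definition convex_fun (f : V -> R) : Prop :=
  forall (x y : V) (l : R), 0 <= l <= 1 ->
    f (l *: x + (1 - l) *: y) <= l * f x + (1 - l) * f y.

Definition strictly_convex_fun (f : V -> R) : Prop :=
  forall (x y : V) (l : R), x != y -> 0 < l < 1 ->
    f (l *: x + (1 - l) *: y) < l * f x + (1 - l) * f y.

Definition L_smooth (gf : V -> V) (L : R) : Prop :=
  forall x y : V, enorm (gf x - gf y) <= L * enorm (x - y).

Definition bregman (g : V -> R) (gg : V -> V) (y x : V) : R :=
  g y - g x - dotv (gg x) (y - x).

Definition solves_mirror_ode (gg gf : V -> V) (c : R -> R) (Z : R -> V) : Prop :=
  {within `[0, +oo[%classic, continuous Z} /\
  forall t : R, 0 < t ->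
    derivable Z t 1 /\
    is_derive t 1 (fun s => gg (Z s)) (- (c t *: gf (Z t))).

Definition nonincreasing_on_nonneg (E : R -> R) : Prop :=
  forall s t : R, 0 <= s -> s <= t -> E t <= E s.

End Defs.

From HB Require Import structures.
From mathcomp Require Import all_boot all_order all_algebra.
From mathcomp Require Import all_classical all_reals all_analysis.
From mathcomp Require Import ring lra.
Import Order.TTheory GRing.Theory Num.Theory.
Import numFieldNormedType.Exports.
Local Open Scope classical_set_scope.
Local Open Scope ring_scope.

(* Along the mirror flow, d/dt D_g(0, Z) = -c <grad f(Z), Z>, and
   <grad f(Z), Z'> <= 0 because Z' and (grad g o Z)' = -c grad f(Z) have a
   nonnegative inner product (grad g is monotone).  Since f(0) = 0,
   <grad f(Z), Z> = f(Z) + D_f(0, Z).  Differentiating either energy and using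
   D_f(0, Z) >= 0 (resp. >= mu D_g(0, Z)) and beta' <= e^alpha, every term of
   the derivative is nonpositive.  The rate then follows from
   e^beta f(Z) <= E(t) <= E(0). *)

Set Implicit Arguments. Unset Strict Implicit.

Section InnerProduct.
Variables (R : realType) (n : nat).
Notation V := 'rV[R]_n.

Lemma dotvZl k (u v : V) : dotv (k *: u) v = k * dotv u v.
Proof. by rewrite /dotv mulr_sumr; apply: eq_bigr => i _; rewrite !mxE mulrA. Qed.

Lemma dotvZr k (u v : V) : dotv u (k *: v) = k * dotv u v.
Proof. by rewrite /dotv mulr_sumr; apply: eq_bigr => i _; rewrite !mxE mulrCA. Qed.

Lemma dotvNl (u v : V) : dotv (- u) v = - dotv u v.
Proof. by rewrite /dotv -sumrN; apply: eq_bigr => i _; rewrite !mxE mulNr. Qed.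

Lemma dotvNr (u v : V) : dotv u (- v) = - dotv u v.
Proof. by rewrite /dotv -sumrN; apply: eq_bigr => i _; rewrite !mxE mulrN. Qed.

Lemma dotvDl (u v w : V) : dotv (v + w) u = dotv v u + dotv w u.
Proof. by rewrite /dotv -big_split; apply: eq_bigr => i _; rewrite !mxE mulrDl. Qed.

Lemma cvg_dotv (T : Type) (F : set_system T) {FF : Filter F} (u v : T -> V) (a b : V) :
  u x @[x --> F] --> a -> v x @[x --> F] --> b ->
  dotv (u x) (v x) @[x --> F] --> dotv a b.
Proof.
move=> ua vb; apply: (@cvg_big R^o 'I_n +%R 0 xpredT) => //.
  by move=> z; apply: add_continuous.
move=> i _; apply: cvgM.
- exact: (cvg_comp _ _ ua (@coord_continuous R 1 n 0 i a)).
- exact: (cvg_comp _ _ vb (@coord_continuous R 1 n 0 i b)).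
Qed.

End InnerProduct.

Section Calculus.
Variables (R : realType) (n : nat).
Notation V := 'rV[R]_n.

Lemma is_derive_dotv (A B : R -> V) t : derivable A t 1 -> derivable B t 1 ->
  is_derive t 1 (fun s => dotv (A s) (B s))
    (dotv ('D_1 A t) (B t) + dotv (A t) ('D_1 B t)).
Proof.
move=> dA dB.
have is_derive_entry (C : R -> V) i : derivable C t 1 ->
    is_derive t 1 (fun s => C s 0 i) ('D_1 C t 0 i).
  move=> dC; apply: DeriveDef; first exact: (derivable_mxP C t 1).1 dC 0 i.
  by rewrite (derive_mx dC) mxE.
have -> : (fun s => dotv (A s) (B s)) =
    \sum_(i < n) ((fun s => A s 0 i) * (fun s => B s 0 i)).
  by apply/funext => s; rewrite /dotv fct_sumE.
apply: is_derive_eq.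
  apply: is_derive_sum => i.
  by apply: is_deriveM; apply: is_derive_entry.
rewrite /dotv -big_split /=; apply: eq_bigr => i _.
by rewrite /GRing.scale /=; ring.
Qed.

Lemma is_gradient_continuous (f : V -> R) (gf : V -> V) : is_gradient f gf -> continuous f.
Proof. by move=> f_grad x; exact/differentiable_continuous/(f_grad x).1. Qed.

Lemma is_derive_gradient_comp (f : V -> R) (gf : V -> V) (Z : R -> V) t :
  is_gradient f gf -> derivable Z t 1 ->
  is_derive t 1 (fun s => f (Z s)) (dotv (gf (Z t)) ('D_1 Z t)).
Proof.
move=> Hf dZ.
have dZ' : differentiable Z t by apply/derivable1_diffP.
have [df Df] := Hf (Z t).
have dfZ : differentiable (f \o Z) t by apply: differentiable_comp.
apply: DeriveDef; first exact: diff_derivable.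
have -> : (fun s => f (Z s)) = f \o Z by [].
by rewrite deriveE // diff_comp //= -(deriveE _ dZ') -(deriveE _ df).
Qed.

Lemma at_right0_sub_dnbhs : ((0 : R)^'+ : set_system R) `=>` (0 : R)^'.
Proof.
move=> P /=; rewrite /dnbhs /within /at_right /=.
by apply: filterS => z Pz z0; apply: Pz; rewrite gt_eqF.
Qed.

(* The inner product of the difference quotients is h^-2 times that of the
   increments. *)
Lemma dotv_derive_ge0 (A B : R -> V) t : derivable A t 1 -> derivable B t 1 ->
  (forall s, 0 <= dotv (A s - A t) (B s - B t)) ->
  0 <= dotv ('D_1 A t) ('D_1 B t).
Proof.
move=> dA dB incr_ge0.
have qA : (fun h : R => h^-1 *: (A (h *: 1 + t) - A t)) @ 0^' --> 'D_1 A t by exact: dA.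
have qB : (fun h : R => h^-1 *: (B (h *: 1 + t) - B t)) @ 0^' --> 'D_1 B t by exact: dB.
apply: (cvgr_to_ge (cvg_dotv qA qB)); near=> h.
rewrite dotvZl dotvZr mulrA; apply: mulr_ge0; last exact: incr_ge0.
by rewrite -expr2 sqr_ge0.
Unshelve. all: by end_near.
Qed.

Lemma nonincreasing_on_nonneg_derive (E : R -> R) :
  {within `[0, +oo[, continuous E} ->
  (forall t : R, 0 < t -> derivable E t 1 /\ 'D_1 E t <= 0) ->
  nonincreasing_on_nonneg E.
Proof.
move=> cE HE s t s0 st; apply: (@ler0_derive1_nincry R E 0) => // x.
  by rewrite in_itv /= andbT => /HE[].
by rewrite in_itv /= andbT derive1E => /HE[].
Qed.

Lemma within_continuous_comp (A : set R) (T U : topologicalType) (u : R -> T) (h : T -> U) :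
  {within A, continuous u} -> continuous h -> {within A, continuous (fun s => h (u s))}.
Proof. by move=> cu ch x; apply: (continuous_comp (cu x) (ch _)). Qed.

Lemma is_derive_expR_comp (b : R -> R) t : derivable b t 1 ->
  is_derive t 1 (expR \o b) (expR (b t) * derive1 b t).
Proof. by move=> db; apply: is_derive1_comp; rewrite derive1E; apply: derivableP. Qed.

End Calculus.

Section Convexity.
Variables (R : realType) (n : nat).
Notation V := 'rV[R]_n.
Variables (f : V -> R) (gf : V -> V).
Hypothesis f_grad : is_gradient f gf.

Lemma strictly_convex_fun_convex : strictly_convex_fun f -> convex_fun f.
Proof.
move=> f_sconv x y l /andP[l0 l1].
have [->|xy] := eqVneq x y.
  by rewrite -scalerDl addrC subrK scale1r -mulrDl addrC subrK mul1r.
have [->|l_neq0] := eqVneq l 0.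
  by rewrite scale0r add0r subr0 scale1r mul0r add0r mul1r.
have [->|l_neq1] := eqVneq l 1.
  by rewrite subrr scale0r addr0 scale1r mul0r addr0 mul1r.
apply/ltW/f_sconv => //.
by rewrite lt0r l_neq0 l0 /= lt_neqAle l_neq1 l1.
Qed.

Hypothesis f_conv : convex_fun f.

(* The directional derivative along y - x is the right limit of difference
   quotients, each bounded by f y - f x through convexity on [x, y]. *)
Lemma gradient_convex_le x y : f x + dotv (gf x) (y - x) <= f y.
Proof.
have [dfx Dfx] := f_grad x.
rewrite -Dfx addrC -lerBrDr.
have quot := cvg_trans (cvg_app _ (@at_right0_sub_dnbhs R))
  (@diff_derivable _ _ _ f x (y - x) dfx).
apply: (cvgr_to_le quot); near=> h.
have h0 : 0 < h by near: h; exact: nbhs_right_gt.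
have h1 : h < 1 by near: h; exact: nbhs_right_lt.
have := f_conv y x (l := h); rewrite ltW // ltW //= => /(_ isT).
have -> : h *: y + (1 - h) *: x = h *: (y - x) + x.
  by rewrite scalerBr scalerBl scale1r addrCA addrC.
move=> conv_hyx; rewrite /GRing.scale /= ler_pdivrMl // lerBlDr.
by apply: (le_trans conv_hyx); rewrite mulrBl mul1r; lra.
Unshelve. all: by end_near.
Qed.

Lemma bregman_ge0 y x : 0 <= bregman f gf y x.
Proof. by have := gradient_convex_le x y; rewrite /bregman; lra. Qed.

Lemma gradient_monotone x y : 0 <= dotv (gf x - gf y) (x - y).
Proof.
have := gradient_convex_le y x; have := gradient_convex_le x y.
by rewrite -opprB dotvNr dotvDl dotvNl; lra.
Qed.

End Convexity.

Lemma bregman0E (R : realType) (n : nat) (f : 'rV[R]_n -> R) gf x :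
  f 0 = 0 -> bregman f gf 0 x = dotv (gf x) x - f x.
Proof. by move=> f0; rewrite /bregman f0 !sub0r dotvNr opprK addrC. Qed.

Section MirrorFlow.
Variables (R : realType) (n : nat).
Notation V := 'rV[R]_n.
Variables (g : V -> R) (gf gg : V -> V) (c : R -> R) (Z : R -> V).
Hypothesis g_grad : is_gradient g gg.
Hypothesis Z_flow : solves_mirror_ode gg gf c Z.

Lemma continuous_flow_bregman0 : continuous gg ->
  {within `[0, +oo[, continuous (fun s => bregman g gg 0 (Z s))}.
Proof.
move=> cgg.
have cgZ := within_continuous_comp Z_flow.1 (is_gradient_continuous g_grad).
have cggZ := within_continuous_comp Z_flow.1 cgg.
move=> x; apply: cvgB; first by apply: cvgB; [exact: cvg_cst | exact: cgZ].
apply: cvg_dotv; first exact: cggZ.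
by apply: cvgB; [exact: cvg_cst | exact: Z_flow.1].
Qed.

Lemma is_derive_flow_bregman0 (t : R) : 0 < t ->
  is_derive t 1 (fun s => bregman g gg 0 (Z s)) (- (c t * dotv (gf (Z t)) (Z t))).
Proof.
move=> t0; have [dZ [dggZ DggZ]] := Z_flow.2 t t0.
have -> : (fun s => bregman g gg 0 (Z s)) =
    (cst (g 0) - (fun s => g (Z s))) + (fun s => dotv (gg (Z s)) (Z s)).
  by apply/funext => s /=; rewrite /bregman sub0r dotvNr opprK.
apply: is_derive_eq.
  apply: is_deriveD (is_derive_dotv dggZ dZ).
  exact: is_deriveB (is_derive_gradient_comp g_grad dZ).
by rewrite DggZ dotvNl dotvZl /=; ring.
Qed.

Lemma gradient_dotv_flow_le0 (t : R) : convex_fun g -> 0 < t -> 0 < c t ->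
  dotv (gf (Z t)) ('D_1 Z t) <= 0.
Proof.
move=> g_conv t0 c0; have [dZ [dggZ DggZ]] := Z_flow.2 t t0.
have := dotv_derive_ge0 dggZ dZ (fun s => gradient_monotone g_grad g_conv _ _).
by rewrite DggZ dotvNl dotvZl oppr_ge0 pmulr_rle0.
Qed.

End MirrorFlow.

Lemma ler_expRN_mul (R : realType) (b x y : R) :
  expR b * x <= y -> x <= expR (- b) * y.
Proof.
move=> bxy; rewrite -[x](mul1r) -(expR0 R) -(addNr b) expRD -mulrA.
by rewrite ler_wpM2l // ltW ?expR_gt0.
Qed.

Lemma rate_of_nonincreasing_energy (R : realType) (E F beta : R -> R) :
  nonincreasing_on_nonneg E -> (forall t, 0 <= t -> expR (beta t) * F t <= E t) ->
  forall t, 0 <= t -> F t <= expR (- beta t) * E 0.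
Proof.
move=> E_noninc F_le t t0; apply: ler_expRN_mul.
exact: le_trans (F_le t t0) (E_noninc 0 t (lexx 0) t0).
Qed.

Lemma energy_derivative_le0 (R : realType) (ea eb b' p q G : R) :
  0 < eb -> 0 <= ea -> b' <= ea -> q <= 0 -> 0 <= G -> 0 <= p - G ->
  eb * q - ea * eb * p + eb * b' * G <= 0.
Proof.
move=> eb_gt0 ea_ge0 b'_le q_le0 G_ge0 slack_ge0.
have -> : eb * q - ea * eb * p + eb * b' * G = eb * (q - ea * (p - G) - G * (ea - b')).
  by ring.
rewrite pmulr_rle0 //.
have : 0 <= ea * (p - G) by exact: mulr_ge0.
have : 0 <= G * (ea - b') by rewrite mulr_ge0 ?subr_ge0.
lra.
Qed.

Section Energies.
Variables (R : realType) (n : nat).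
Notation V := 'rV[R]_n.
Variables (f g : V -> R) (gf gg : V -> V) (alpha beta : R -> R).
Hypotheses (f_grad : is_gradient f gf) (f0 : f 0 = 0) (f_ge0 : forall x, 0 <= f x).
Hypotheses (g_grad : is_gradient g gg) (gg_cont : continuous gg) (g_conv : convex_fun g).
Hypothesis beta_cont : {within `[0, +oo[, continuous beta}.
Hypothesis beta_deriv : forall t, 0 < t ->
  derivable beta t 1 /\ 0 < derive1 beta t /\ derive1 beta t <= expR (alpha t).

Lemma convex_energy_nonincreasing (Z : R -> V) : convex_fun f ->
  solves_mirror_ode gg gf (fun t => expR (alpha t + beta t)) Z ->
  nonincreasing_on_nonneg (fun t => bregman g gg 0 (Z t) + expR (beta t) * f (Z t)).
Proof.
move=> f_conv Z_flow.
apply: nonincreasing_on_nonneg_derive.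
  move=> x; apply: cvgD; first exact: (continuous_flow_bregman0 g_grad Z_flow gg_cont).
  apply: cvgM; first exact: (within_continuous_comp beta_cont (@continuous_expR R)).
  exact: (within_continuous_comp Z_flow.1 (is_gradient_continuous f_grad)).
move=> t t0; have [dbeta [_ b'_le]] := beta_deriv t0.
have [dZ _] := Z_flow.2 t t0.
have E_deriv := is_deriveD (is_derive_flow_bregman0 g_grad Z_flow t0)
  (is_deriveM (is_derive_expR_comp dbeta) (is_derive_gradient_comp f_grad dZ)).
have -> : (fun t => bregman g gg 0 (Z t) + expR (beta t) * f (Z t)) =
  (fun s => bregman g gg 0 (Z s)) + (expR \o beta) * (fun s => f (Z s)) by [].
have [E_derivable ->] := E_deriv; split=> //.
have q_le0 := gradient_dotv_flow_le0 g_grad Z_flow g_conv t0 (expR_gt0 _).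
have Bf_ge0 := bregman_ge0 f_grad f_conv 0 (Z t); rewrite bregman0E // in Bf_ge0.
have := energy_derivative_le0 (expR_gt0 (beta t)) (ltW (expR_gt0 (alpha t))) b'_le q_le0
  (f_ge0 (Z t)) Bf_ge0.
by rewrite expRD /GRing.scale /=; lra.
Qed.

Lemma uniformly_convex_energy_nonincreasing (mu : R) (Z : R -> V) : 0 < mu ->
  (forall x y, bregman f gf x y >= mu * bregman g gg x y) ->
  solves_mirror_ode gg gf (fun t => expR (alpha t) / mu) Z ->
  nonincreasing_on_nonneg
    (fun t => expR (beta t) * (mu * bregman g gg 0 (Z t) + f (Z t))).
Proof.
move=> mu_gt0 f_unif Z_flow.
apply: nonincreasing_on_nonneg_derive.
  move=> x; apply: cvgM; first exact: (within_continuous_comp beta_cont (@continuous_expR R)).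
  apply: cvgD; last exact: (within_continuous_comp Z_flow.1 (is_gradient_continuous f_grad)).
  by apply: cvgM; [exact: cvg_cst | exact: (continuous_flow_bregman0 g_grad Z_flow gg_cont)].
move=> t t0; have [dbeta [_ b'_le]] := beta_deriv t0.
have [dZ _] := Z_flow.2 t t0.
have E_deriv := is_deriveM (is_derive_expR_comp dbeta)
  (is_deriveD (is_deriveZ mu (is_derive_flow_bregman0 g_grad Z_flow t0))
    (is_derive_gradient_comp f_grad dZ)).
have -> : (fun t => expR (beta t) * (mu * bregman g gg 0 (Z t) + f (Z t))) =
  (expR \o beta) * (mu *: (fun s => bregman g gg 0 (Z s)) + (fun s => f (Z s))) by [].
have [E_derivable ->] := E_deriv; split=> //.
have q_le0 := gradient_dotv_flow_le0 g_grad Z_flow g_conv t0 (divr_gt0 (expR_gt0 _) mu_gt0).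
have slack_ge0 : 0 <= dotv (gf (Z t)) (Z t) - (mu * bregman g gg 0 (Z t) + f (Z t)).
  by have := f_unif 0 (Z t); rewrite [bregman f _ _ _]bregman0E //; lra.
have G_ge0 : 0 <= mu * bregman g gg 0 (Z t) + f (Z t).
  exact: addr_ge0 (mulr_ge0 (ltW mu_gt0) (bregman_ge0 g_grad g_conv _ _)) (f_ge0 _).
have := energy_derivative_le0 (expR_gt0 (beta t)) (ltW (expR_gt0 (alpha t))) b'_le q_le0
  G_ge0 slack_ge0.
have mu_cancel : mu * (expR (alpha t) / mu * dotv (gf (Z t)) (Z t)) =
  expR (alpha t) * dotv (gf (Z t)) (Z t) by field; rewrite gt_eqF.
by rewrite !fctE /GRing.scale /= /GRing.scale /= mulrN mu_cancel; lra.
Qed.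

End Energies.

Unset Implicit Arguments. Set Strict Implicit.

Theorem theorem4 (R : realType) (n : nat)
  (f : 'rV[R]_n -> R) (gf : 'rV[R]_n -> 'rV[R]_n) (L : R)
  (g : 'rV[R]_n -> R) (gg : 'rV[R]_n -> 'rV[R]_n)
  (alpha beta : R -> R) :
  C1_with_gradient f gf -> convex_fun f -> L_smooth gf L ->
  (forall x, f 0 <= f x) -> (forall x, f x = f 0 -> x = 0) -> f 0 = 0 ->
  C1_with_gradient g gg -> strictly_convex_fun g ->
  {within `[0, +oo[%classic, continuous beta} ->
  (forall t : R, 0 < t ->
     derivable beta t 1 /\ 0 < derive1 beta t /\ derive1 beta t <= expR (alpha t)) ->
  beta x @[x --> +oo] --> +oo ->
  (* (i) convex case, mu = 0 *)
  (forall Z : R -> 'rV[R]_n,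
     solves_mirror_ode gg gf (fun t => expR (alpha t + beta t)) Z ->
     let E := fun t => bregman g gg 0 (Z t) + expR (beta t) * f (Z t) in
     nonincreasing_on_nonneg E /\
     forall t : R, 0 <= t -> f (Z t) <= expR (- beta t) * E 0)
  /\
  (* (ii) mu-uniformly convex case *)
  (forall mu : R, 0 < mu ->
     (forall x y, bregman f gf x y >= mu * bregman g gg x y) ->
     forall Z : R -> 'rV[R]_n,
     solves_mirror_ode gg gf (fun t => expR (alpha t) / mu) Z ->
     let E := fun t => expR (beta t) * (mu * bregman g gg 0 (Z t) + f (Z t)) in
     nonincreasing_on_nonneg E /\
     forall t : R, 0 <= t -> f (Z t) <= expR (- beta t) * E 0).
Proof.
move=> [f_grad _] f_conv _ fmin _ f0 [g_grad gg_cont] g_sconv beta_cont beta_deriv _.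
have g_conv := strictly_convex_fun_convex g_sconv.
have f_ge0 x : 0 <= f x by rewrite -f0.
split.
- move=> Z Z_flow E.
  have E_noninc : nonincreasing_on_nonneg E.
    exact: convex_energy_nonincreasing f_conv Z_flow.
  split=> //; apply: rate_of_nonincreasing_energy => // t _.
  by rewrite /E lerDr (bregman_ge0 g_grad g_conv).
- move=> mu mu_gt0 f_unif Z Z_flow E.
  have E_noninc : nonincreasing_on_nonneg E.
    exact: uniformly_convex_energy_nonincreasing mu_gt0 f_unif Z_flow.
  split=> //; apply: rate_of_nonincreasing_energy => // t _.
  apply: ler_wpM2l; first exact: ltW (expR_gt0 _).
  by rewrite lerDr; exact: mulr_ge0 (ltW mu_gt0) (bregman_ge0 g_grad g_conv _ _).
Qed.
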